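(* For any $(k,c,\delta,\epsilon)$-SKE protocol $\Pi$ in a full-access multipath setting $\mathscr S$, there is a $(k,c,0,\epsilon')$-SKE protocol $\Pi'$ over $\mathscr S$ with $\epsilon'\le\epsilon+\delta$.
   Context: Multipath setting: an $(n,t_a,t_b,t_e,\lambda)$-multipath setting has a sender Alice, a receiver Bob and a passive, computationally unbounded eavesdropper Eve, connected by $n$ disjoint paths; Alice and Bob share no key. At any time Alice, Bob and Eve access at most $t_a,t_b,t_e$ paths respectively. Time is divided into intervals of $\lambda$ bits sent over a path; at the start of each interval every party chooses its accessed paths and keeps them for the interval. Eve's view is everything sent over her accessed paths. The setting is full-access if $t_a=t_b=n$ (so Alice and Bob both see the whole communication transcript). Protocols may be interactive and use local randomness. SKE protocol: a $(k,c,\delta,\epsilon)$-SKE protocol uses $c$ bits of communication and lets Alice compute a key $S\in\{0,1\}^k$ and Bob an estimate $\hat S\in\{0,1\}^k$ with $\Pr(\hat S\neq S)\le\delta$ and $SD([S,View_E],[U_k,View_E])\le\epsilon$, where $View_E$ is Eve's view, $U_k$ an independent uniform $k$-bit string, and $SD(X,Y)=\frac12\sum_x|\Pr(X=x)-\Pr(Y=x)|$. *)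

From HB Require Import structures.
From mathcomp Require Import all_boot all_order all_algebra.
From mathcomp Require Import reals.
Unset Printing Implicit Defensive.
Import Order.TTheory GRing.Theory Num.Theory.
Local Open Scope ring_scope.

(* A transmission: (interval index, path, direction (true = Alice -> Bob), bit). *)
Definition tr (n : nat) : Type := (nat * 'I_n * bool * bool)%type.
Definition tr_int {n} (t : tr n) : nat := t.1.1.1.
Definition tr_path {n} (t : tr n) : 'I_n := t.1.1.2.
Definition tr_dir {n} (t : tr n) : bool := t.1.2.
Definition tr_bit {n} (t : tr n) : bool := t.2.

Definition is_dist {R : realType} {T : finType} (p : T -> R) : Prop :=
  (forall x, 0 <= p x) /\ \sum_(x : T) p x = 1.

(* An interactive protocol in a FULL-ACCESS n-path setting (t_a = t_b = n):
   both parties see every transmitted bit. *)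
Record protocol (R : realType) (n k : nat) := Protocol {
  RA : finType; RB : finType;
  pA : RA -> R; pB : RB -> R;
  sched : seq (tr n) -> nat * 'I_n * bool;
  msgA : RA -> seq (tr n) -> bool;
  msgB : RB -> seq (tr n) -> bool;
  outA : RA -> seq (tr n) -> k.-tuple bool;
  outB : RB -> seq (tr n) -> k.-tuple bool }.
Arguments RA {R n k} _. Arguments RB {R n k} _.
Arguments pA {R n k} _ _. Arguments pB {R n k} _ _.
Arguments sched {R n k} _ _. Arguments msgA {R n k} _ _ _.
Arguments msgB {R n k} _ _ _. Arguments outA {R n k} _ _ _.
Arguments outB {R n k} _ _ _.

Fixpoint run {R n k} (P : protocol R n k) (ra : RA P) (rb : RB P) (m : nat)
  : seq (tr n) :=
  match m with
  | 0 => [::]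
  | m'.+1 =>
      let h := run P ra rb m' in
      let s := sched P h in
      rcons h (s.1.1, s.1.2, s.2, if s.2 then msgA P ra h else msgB P rb h)
  end.

Definition valid {R n k} (lambda c : nat) (P : protocol R n k) : Prop :=
  is_dist (pA P) /\ is_dist (pB P) /\
  forall ra rb,
    let t := run P ra rb c in
    sorted leq (map tr_int t) /\
    forall (i : nat) (p : 'I_n),
      (count (fun x => (tr_int x == i) && (tr_path x == p)) t <= lambda)%N.

(* A passive adaptive eavesdropper: with local randomness RE, at the start of
   interval i it chooses a set of paths (of size <= t_e) as a function of its
   randomness and of everything it observed in earlier intervals. *)
Record eve (R : realType) (n : nat) := Eve {
  RE : finType;
  pE : RE -> R;
  choose : RE -> seq (tr n) -> nat -> {set 'I_n} }.
Arguments RE {R n} _. Arguments pE {R n} _ _. Arguments choose {R n} _ _ _ _.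

Definition eve_ok {R n} (te : nat) (E : eve R n) : Prop :=
  is_dist (pE E) /\ forall re h i, (#|choose E re h i| <= te)%N.

Definition eve_obs {R n} (E : eve R n) (re : RE E) (t : seq (tr n)) : seq (tr n) :=
  foldl (fun obs x =>
           let prev := [seq o <- obs | (tr_int o < tr_int x)%N] in
           if tr_path x \in choose E re prev (tr_int x) then rcons obs x else obs)
        [::] t.

Definition law {R : realType} {O : finType} (p : O -> R) {T : eqType}
  (X : O -> T) (x : T) : R := \sum_(w : O | X w == x) p w.

Definition SD {R : realType} {O1 O2 : finType} (p1 : O1 -> R) (p2 : O2 -> R)
  {T : eqType} (X1 : O1 -> T) (X2 : O2 -> T) : R :=
  2^-1 * \sum_(x <- undup ([seq X1 w | w <- enum O1] ++ [seq X2 w | w <- enum O2]))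
            `|law p1 X1 x - law p2 X2 x|.

Definition omega {R n k} (P : protocol R n k) (E : eve R n) : finType :=
  (RA P * RB P * RE E)%type.
Definition pomega {R n k} {P : protocol R n k} {E : eve R n}
  (w : omega P E) : R := pA P w.1.1 * pB P w.1.2 * pE E w.2.

Definition keyA {R n k} (c : nat) {P : protocol R n k} {E : eve R n} (w : omega P E) :=
  outA P w.1.1 (run P w.1.1 w.1.2 c).
Definition viewE {R n k} (c : nat) {P : protocol R n k} {E : eve R n} (w : omega P E)
  : (RE E * seq (tr n))%type :=
  (w.2, eve_obs E w.2 (run P w.1.1 w.1.2 c)).

Definition SKE {R : realType} {n k : nat} (te lambda c : nat) (delta eps : R) (P : protocol R n k)
  : Prop :=
  valid lambda c P /\
  \sum_(r : (RA P * RB P)%type |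
          outB P r.2 (run P r.1 r.2 c) != outA P r.1 (run P r.1 r.2 c))
     pA P r.1 * pB P r.2 <= delta /\
  (forall E : eve R n, eve_ok te E ->
     SD (@pomega R n k P E)
        (fun u : (omega P E * k.-tuple bool)%type => pomega u.1 / 2 ^+ k)
        (fun w => (keyA c w, viewE c w))
        (fun u : (omega P E * k.-tuple bool)%type => (u.2, viewE c u.1))
     <= eps).

From HB Require Import structures.
From mathcomp Require Import all_boot all_order all_algebra.
From mathcomp Require Import reals.
Import Order.TTheory GRing.Theory Num.Theory.
Local Open Scope ring_scope.

(* Both parties discard their outputs and output instead the most likely value
   of Alice's key given the transcript, which both of them see in the
   full-access setting; hence they always agree.  Transcripts of a two-party
   protocol are rectangles, so once Bob's randomness is fixed the fibre of a
   transcript over Alice's randomness is the set of all her coins consistent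
   with it; on that fibre Bob's estimate is a constant, so it is no better a
   guess, and the new key differs from Alice's old key with probability at
   most delta.  Eve's view is unchanged, so the statistical distance to the
   ideal key grows by at most delta. *)

Section Sums.
Context {R : realType}.

Lemma sum_partition {I : finType} {T : eqType} (X : I -> T) (F : I -> R) :
  \sum_i F i = \sum_(t <- undup (map X (enum I))) \sum_(i | X i == t) F i.
Proof.
symmetry; under eq_bigr do rewrite big_mkcond; rewrite exchange_big /=.
apply: eq_bigr => i _; rewrite -big_mkcond -big_filter.
have -> : [seq t <- undup (map X (enum I)) | X i == t] = [:: X i].
  rewrite (eq_filter (a2 := pred1 (X i))) => [|t]; last by rewrite /= eq_sym.
  by rewrite filter_pred1_uniq ?undup_uniq // mem_undup map_f ?mem_enum.
by rewrite big_seq1.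
Qed.

Lemma ler_sum_fibers {I : finType} {T : eqType} (X : I -> T) (F G : I -> R) :
  (forall i0, \sum_(i | X i == X i0) F i <= \sum_(i | X i == X i0) G i) ->
  \sum_i F i <= \sum_i G i.
Proof.
move=> leFG; rewrite (sum_partition X F) (sum_partition X G) !big_seq.
by apply: ler_sum => t; rewrite mem_undup => /mapP[i0 _ ->].
Qed.

Lemma sum_pair_marginal {I J : finType} (F : I -> R) (q : J -> R) :
  \sum_j q j = 1 -> \sum_(w : I * J) F w.1 * q w.2 = \sum_i F i.
Proof.
move=> q1; rewrite -(pair_bigA _ (fun i j => F i * q j)) /=.
by apply: eq_bigr => i _; rewrite -mulr_sumr q1 mulr1.
Qed.

End Sums.

Section StatisticalDistance.
Context {R : realType} {O1 O2 : finType} {p1 : O1 -> R} {p2 : O2 -> R} {T : eqType}.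

Lemma lawE (X : O1 -> T) x : law p1 X x = \sum_w p1 w * (X w == x)%:R.
Proof.
by rewrite /law big_mkcond; apply: eq_bigr => w _; case: eqP; rewrite ?mulr1 ?mulr0.
Qed.

Lemma eq_SD {X1 X1' : O1 -> T} {X2 X2' : O2 -> T} :
  X1 =1 X1' -> X2 =1 X2' -> SD p1 p2 X1 X2 = SD p1 p2 X1' X2'.
Proof.
move=> e1 e2; rewrite /SD (eq_map e1) (eq_map e2); congr (_ * _).
apply: eq_bigr => x _; rewrite /law.
by congr (`|_ - _|); apply: eq_bigl => w; rewrite ?e1 ?e2.
Qed.

Lemma SD_seq (X1 : O1 -> T) (X2 : O2 -> T) (L : seq T) :
  uniq L -> (forall w, X1 w \in L) -> (forall w, X2 w \in L) ->
  SD p1 p2 X1 X2 = 2^-1 * \sum_(x <- L) `|law p1 X1 x - law p2 X2 x|.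
Proof.
move=> uL L1 L2; rewrite /SD; congr (_ * _).
set D := undup _.
have law0 x : x \notin D -> `|law p1 X1 x - law p2 X2 x| = 0.
  move=> xD; rewrite /law !big_pred0 ?subrr ?normr0 // => w; apply/negP => /eqP ex;
    by move: xD; rewrite -ex mem_undup mem_cat map_f ?orbT // mem_enum.
rewrite [RHS](bigID (mem D)) /= [X in _ + X]big1 ?addr0 => [|x /law0 //].
rewrite -(big_filter L); symmetry; apply: perm_big; apply: uniq_perm;
  rewrite ?filter_uniq ?undup_uniq //.
move=> x; rewrite mem_filter /=; case xD: (x \in D) => //=.
by move: xD; rewrite mem_undup mem_cat => /orP[] /mapP[w _ ->]; [apply: L1 | apply: L2].
Qed.

Lemma sum_dist_law_le {X X' : O1 -> T} {L : seq T} :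
  (forall w, 0 <= p1 w) -> uniq L -> (forall w, X w \in L) -> (forall w, X' w \in L) ->
  \sum_(x <- L) `|law p1 X' x - law p1 X x| <= 2 * \sum_w p1 w * (X w != X' w)%:R.
Proof.
move=> p0 uL LX LX'.
have count1 w (Y : O1 -> T) : (forall w, Y w \in L) ->
    \sum_(x <- L) ((Y w == x)%:R : R) = 1.
  move=> LY; rewrite -natr_sum (_ : \sum_(x <- L) _ = count_mem (Y w) L).
    by rewrite count_uniq_mem ?LY.
  rewrite -sum1_count [RHS]big_mkcond; apply: eq_bigr => x _.
  by rewrite /= eq_sym; case: (_ == _).
apply: (@le_trans _ _ (\sum_(x <- L) \sum_w p1 w * (X w != X' w)%:R *
                         ((X' w == x)%:R + (X w == x)%:R))).
  apply: ler_sum => x _; rewrite !lawE -sumrB.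
  apply: le_trans (ler_norm_sum _ _ _) _; apply: ler_sum => w _.
  rewrite -mulrBr normrM ger0_norm // -mulrA ler_wpM2l //.
  have [->|_] := eqVneq (X w) (X' w); first by rewrite subrr normr0 mulr_ge0 ?addr_ge0.
  by rewrite mul1r; case: (X' w == x); case: (X w == x);
    rewrite ?subrr ?normr0 ?subr0 ?sub0r ?normrN ?normr1 ?addr0 ?add0r ?addr_ge0.
rewrite exchange_big /= mulr_sumr; apply: ler_sum => w _.
by rewrite -mulr_sumr big_split /= !count1 // mulrC.
Qed.

Lemma SD_perturb {X1 X1' : O1 -> T} {X2 : O2 -> T} :
  (forall w, 0 <= p1 w) ->
  SD p1 p2 X1' X2 <= SD p1 p2 X1 X2 + \sum_w p1 w * (X1 w != X1' w)%:R.
Proof.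
move=> p0.
set L := undup ([seq X1 w | w <- enum O1] ++ [seq X1' w | w <- enum O1]
                 ++ [seq X2 w | w <- enum O2]).
have uL : uniq L by exact: undup_uniq.
have L1 w : X1 w \in L by rewrite mem_undup !mem_cat map_f ?mem_enum.
have L1' w : X1' w \in L by rewrite mem_undup !mem_cat map_f ?mem_enum ?orbT.
have L2 w : X2 w \in L by rewrite mem_undup !mem_cat map_f ?mem_enum ?orbT.
rewrite !(@SD_seq _ _ L) //.
set e := \sum_w _; have -> : e = 2^-1 * (2 * e) by rewrite mulrA mulVf ?mul1r ?pnatr_eq0.
rewrite -mulrDr ler_wpM2l ?invr_ge0 ?ler0n //.
apply: le_trans _ (lerD (lexx _) (sum_dist_law_le p0 uL L1 L1')).
rewrite -big_split /=; apply: ler_sum => x _.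
by rewrite addrC; apply: ler_distD.
Qed.

End StatisticalDistance.

Section GuessKey.
Context {R : realType} {n k : nat} (c : nat) (P : protocol R n k).

(* The sender and bit of each transmission depend on the history only through
   its own party's randomness, so transcripts form combinatorial rectangles. *)
Lemma run_rect {ra rb ra' rb' m} :
  run P ra rb m = run P ra' rb' m -> run P ra rb' m = run P ra rb m.
Proof.
elim: m => [//|m IHm] /= /eqP; rewrite eqseq_rcons => /andP[/eqP eq_h /eqP eq_x].
rewrite IHm //; congr rcons; move: eq_x; rewrite -eq_h.
by case: (sched P _) => [[i p] []] /= [->].
Qed.

Definition guess_cost (t : seq (tr n)) (s : k.-tuple bool) : R :=
  \sum_(ra | [exists rb, run P ra rb c == t]) pA P ra * (outA P ra t != s)%:R.

Definition guess_key (t : seq (tr n)) : k.-tuple bool :=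
  [arg min_(s < nseq_tuple k false) guess_cost t s]%O.

Lemma guess_key_min t s : guess_cost t (guess_key t) <= guess_cost t s.
Proof. by rewrite /guess_key; case: arg_minP => // s0 _; apply. Qed.

Lemma guess_cost_fiber rb ra0 (f : seq (tr n) -> k.-tuple bool) :
  \sum_(ra | run P ra rb c == run P ra0 rb c)
     pA P ra * (outA P ra (run P ra rb c) != f (run P ra rb c))%:R
  = guess_cost (run P ra0 rb c) (f (run P ra0 rb c)).
Proof.
rewrite /guess_cost (eq_bigr (fun ra =>
    pA P ra * (outA P ra (run P ra0 rb c) != f (run P ra0 rb c))%:R)) => [|ra /eqP -> //].
apply: eq_bigl => ra; apply/idP/existsP => [|[rb' /eqP eq_t]]; first by exists rb.
by rewrite (run_rect eq_t) eq_t.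
Qed.

Lemma guess_key_error_le rb (f : seq (tr n) -> k.-tuple bool) :
  \sum_ra pA P ra * (outA P ra (run P ra rb c) != guess_key (run P ra rb c))%:R
  <= \sum_ra pA P ra * (outA P ra (run P ra rb c) != f (run P ra rb c))%:R.
Proof.
apply: (@ler_sum_fibers _ _ _ (fun ra => run P ra rb c)) => ra0.
by rewrite !guess_cost_fiber guess_key_min.
Qed.

Lemma guess_key_mismatch_le : (forall rb, 0 <= pB P rb) ->
  \sum_(r : RA P * RB P)
     pA P r.1 * pB P r.2 * (outA P r.1 (run P r.1 r.2 c) != guess_key (run P r.1 r.2 c))%:R
  <= \sum_(r : RA P * RB P | outB P r.2 (run P r.1 r.2 c) != outA P r.1 (run P r.1 r.2 c))
     pA P r.1 * pB P r.2.
Proof.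
move=> pB0; rewrite [X in _ <= X]big_mkcond.
rewrite -(pair_bigA _ (fun ra rb => pA P ra * pB P rb *
            (outA P ra (run P ra rb c) != guess_key (run P ra rb c))%:R)).
rewrite -(pair_bigA _ (fun ra rb => if outB P rb (run P ra rb c) != outA P ra (run P ra rb c)
                                    then pA P ra * pB P rb else 0)).
rewrite exchange_big [X in _ <= X]exchange_big /=; apply: ler_sum => rb _.
under eq_bigr do rewrite mulrAC mulrC.
under [X in _ <= X]eq_bigr => ra _.
  rewrite (_ : (if _ then _ else _) = pB P rb * (pA P ra *
             (outA P ra (run P ra rb c) != outB P rb (run P ra rb c))%:R)); first over.
  by rewrite eq_sym; case: (_ != _); rewrite ?mulr1 ?mulr0 // mulrC.
by rewrite -!mulr_sumr ler_wpM2l ?guess_key_error_le.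
Qed.

Definition guess_protocol : protocol R n k :=
  @Protocol R n k (RA P) (RB P) (pA P) (pB P) (sched P) (msgA P) (msgB P)
    (fun _ => guess_key) (fun _ => guess_key).

Lemma run_guess_protocol ra rb m : run guess_protocol ra rb m = run P ra rb m.
Proof. by elim: m => //= m ->. Qed.

End GuessKey.

Theorem lemma1 (R : realType) (n te lambda k c : nat) (delta eps : R)
  (P : protocol R n k) :
  SKE te lambda c delta eps P ->
  exists (P' : protocol R n k) (eps' : R),
    SKE te lambda c 0 eps' P' /\ eps' <= eps + delta.
Proof.
case=> [[distA [distB hrun]] [err_le SD_le]].
have runE := run_guess_protocol c P.
exists (guess_protocol c P), (eps + delta); split=> //; split.
  split; [exact: distA | split; [exact: distB | by move=> ra rb; rewrite runE; apply: hrun]].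
split; first by rewrite big_pred0 // => r; rewrite /= eqxx.
move=> E hE; have [[pE0 sumE] _] := hE.
rewrite (eq_SD (X1' := fun w : omega P E => (guess_key c P (run P w.1.1 w.1.2 c), viewE c w))
               (X2' := fun u : omega P E * k.-tuple bool => (u.2, viewE c u.1))); last first.
- by move=> u; rewrite /viewE /= runE.
- by move=> w; rewrite /keyA /viewE /= !runE.
apply: le_trans (SD_perturb (X1 := fun w : omega P E => (keyA c w, viewE c w)) _) _.
  by move=> w; rewrite /pomega !mulr_ge0 ?distA.1 ?distB.1 ?pE0.
apply: lerD (SD_le E hE) _.
pose err (r : RA P * RB P) := pA P r.1 * pB P r.2 *
  (outA P r.1 (run P r.1 r.2 c) != guess_key c P (run P r.1 r.2 c))%:R.
rewrite (eq_bigr (fun w : omega P E => err w.1 * pE E w.2)) => [|[[ra rb] re] _];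
  last by rewrite /pomega /keyA /= xpair_eqE eqxx andbT mulrAC.
rewrite sum_pair_marginal //; exact: le_trans (guess_key_mismatch_le c P distB.1) err_le.
Qed.
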